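(* Let $q=2^m$. Then the setwise stabilizer $\mathrm{Stab}_{U_{q+1}}$ of $U_{q+1}$ consists exactly of the following linear fractional transformations: (I) $u\mapsto u_0u$ with $u_0\in U_{q+1}$; (II) $u\mapsto u_0u^{-1}$ with $u_0\in U_{q+1}$; (III) $u\mapsto \frac{u+c^qu_0}{cu+u_0}$ with $u_0\in U_{q+1}$ and $c\in\mathrm{GF}(q^2)^*\setminus U_{q+1}$.
   Context: $U_{q+1}$ is the set of $(q+1)$-th roots of unity in $\mathrm{GF}(q^2)$, viewed as a subset of $\mathrm{PG}(1,q^2)=\mathrm{GF}(q^2)\cup\{\infty\}$. $\mathrm{Stab}_{U_{q+1}}$ is the setwise stabilizer of $U_{q+1}$ under the action of $\mathrm{PGL}_2(\mathrm{GF}(q^2))$ on $\mathrm{PG}(1,q^2)$ by linear fractional transformations $x\mapsto\frac{ax+b}{cx+d}$. *)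

From HB Require Import structures.
From mathcomp Require Import all_boot all_order all_algebra all_field.
Set Implicit Arguments. Unset Strict Implicit. Unset Printing Implicit Defensive.
Import GRing.Theory.
Local Open Scope ring_scope.

(* The projective line PG(1,F) = F ∪ {∞}, modelled as option F
   with None = ∞ and Some x = x. *)
Definition projline (F : finFieldType) := option F.

Definition mobius (F : finFieldType) (a b c d : F) (x : option F) : option F :=
  match x with
  | Some x => if c * x + d != 0 then Some ((a * x + b) / (c * x + d)) else None
  | None => if c != 0 then Some (a / c) else None
  end.

Definition unity_roots (F : finFieldType) (q : nat) : {set F} :=
  [set u : F | u ^+ q.+1 == 1].

Definition unity_roots_P1 (F : finFieldType) (q : nat) : {set option F} :=
  [set Some u | u in unity_roots F q].

Definition stabilizes (T : finType) (f : T -> T) (S : {set T}) : Prop :=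
  f @: S = S.

From HB Require Import structures.
From mathcomp Require Import all_boot all_order all_algebra all_field.
From mathcomp Require Import ring zify.
Set Implicit Arguments.
Unset Strict Implicit.
Unset Printing Implicit Defensive.
Import GRing.Theory.
Local Open Scope ring_scope.

(* Write N x = x^(q+1).  When x |-> x^q is additive, every u in U = U_{q+1}
   satisfies u N(x u + y) = x y^q u^2 + (N x + N y) u + y x^q, so the image
   (a u + b)/(c u + d) of u lies in U exactly when u is a root of the
   difference of the quadratics attached to (a, b) and to (c, d).  As U has at
   least three points, the map stabilizes U iff its pole avoids U and these
   quadratics have the same coefficients:
     a b^q = c d^q,   N a + N b = N c + N d,   b a^q = d c^q.
   Solving this system with a d - b c <> 0 gives type (I) when c = 0, type (II)
   when a = 0, and otherwise, after scaling to a = 1, N d = 1, N c <> 1 and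
   b = c^q d, which is type (III). *)

Lemma quadratic_coef_eq0 (F : fieldType) (al be ga : F) (rs : seq F) :
  uniq rs -> (2 < size rs)%N ->
  {in rs, forall x, al * x ^+ 2 + be * x + ga = 0} ->
  [/\ al = 0, be = 0 & ga = 0].
Proof.
move=> rs_uniq rs_size rs_roots; pose p := Poly [:: ga; be; al].
have p0 : p = 0.
  apply: contraTeq rs_size => /max_poly_roots rs_lt.
  rewrite -leqNgt -ltnS.
  apply: leq_trans (rs_lt rs _ rs_uniq) (size_Poly _).
  apply/allP => x /rs_roots rx; rewrite /root horner_Poly /= mul0r add0r.
  by apply/eqP; rewrite -{}rx; ring.
have coef i : [:: ga; be; al]`_i = 0 by rewrite -coef_Poly -/p p0 coef0.
by split; [apply: (coef 2%N) | apply: (coef 1%N) | apply: (coef 0%N)].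
Qed.

Lemma pchar2_uniq_square (F : fieldType) (z : F) :
  2 \in [pchar F] -> z != 0 -> z != 1 -> uniq [:: 1; z; z ^+ 2].
Proof.
move=> char2 z0 z1; rewrite /= !inE negb_or eq_sym z1 /=.
have sqr_z : z ^+ 2 != 1.
  apply: contra z1 => /eqP z2.
  suff: (z - 1) ^+ 2 == 0 by rewrite expf_eq0 subr_eq0.
  have -> : (z - 1) ^+ 2 = z ^+ 2 - 1 - 2%:R * z + 2%:R by ring.
  by rewrite z2 subrr (pcharf0 char2) mul0r subr0 addr0.
rewrite eq_sym sqr_z andbT; apply: contra z1 => /eqP zz.
by apply/eqP/(mulfI z0); rewrite mulr1 -expr2 -zz.
Qed.

Lemma unity_roots_nontrivial (F : finFieldType) (q : nat) :
  (1 < q)%N -> #|F| = (q ^ 2)%N -> exists2 z, z \in unity_roots F q & z != 1.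
Proof.
move=> q_gt1 cardF.
have [/existsP[x /andP[x0 xq1]] | ] :=
  boolP [exists x : F, (x != 0) && (x ^+ q.-1 != 1)].
  exists (x ^+ q.-1) => //; rewrite inE -exprM; apply/eqP/(mulfI x0).
  have -> : (q.-1 * q.+1 = #|F|.-1)%N by rewrite cardF; nia.
  by rewrite -exprS prednK ?expf_card ?mulr1 // cardF expn_gt0; lia.
rewrite negb_exists => /forallP all1.
have : (size (enum [pred x : F | x != 0%R]) <= q.-1)%N.
  apply: max_unity_roots (enum_uniq _); first lia.
  apply/allP => x; rewrite mem_enum inE unity_rootE => x0.
  by have := all1 x; rewrite x0 negbK.
rewrite -cardE cardC1 cardF; nia.
Qed.

Section Mobius.

Variable F : finFieldType.

Lemma mobius_scale (a b c d k : F) : k != 0 ->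
  mobius a b c d =1 mobius (a / k) (b / k) (c / k) (d / k).
Proof.
move=> k0 [x|] /=.
  have -> : c / k * x + d / k = (c * x + d) / k by field.
  rewrite mulf_eq0 invr_eq0 (negbTE k0) orbF.
  by case: ifP => // h; congr Some; field; rewrite k0 h.
rewrite mulf_eq0 invr_eq0 (negbTE k0) orbF.
by case: ifP => // c0; congr Some; field; rewrite c0 k0.
Qed.

Lemma mobiusK (a b c d : F) : a * d - b * c != 0 ->
  cancel (mobius a b c d) (mobius d (- b) (- c) a).
Proof.
move=> det [x|] /=; last first.
  have [-> | c0] := eqVneq c 0; first by rewrite /= oppr0 eqxx.
  rewrite /=; have -> : - c * (a / c) + a = 0 by field.
  by rewrite eqxx.
have [pole | pole] := eqVneq (c * x + d) 0; rewrite ?pole ?eqxx /=.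
  have [c0 | c0] := eqVneq c 0; rewrite oppr_eq0 c0 /=.
    have d0 : d = 0 by move: pole; rewrite c0 mul0r add0r.
    by move: det; rewrite c0 d0 !mulr0 subrr eqxx.
  congr Some; apply: (mulfI c0).
  by rewrite -(addKr (c * x) d) pole addr0; field; rewrite oppr_eq0.
set y := (a * x + b) / (c * x + d).
have den : - c * y + a = (a * d - b * c) / (c * x + d) by rewrite /y; field.
rewrite den mulf_eq0 invr_eq0 negb_or det pole /= /y; congr Some.
by field; rewrite det pole.
Qed.

End Mobius.

Section UnityRoots.

Variables (F : finFieldType) (q : nat).
Local Notation U := (unity_roots F q).
Local Notation P1 := (unity_roots_P1 F q).

Lemma unity_root_neq0 (u : F) : u \in U -> u != 0.
Proof.
by rewrite inE; apply: contraL => /eqP->; rewrite expr0n eq_sym oner_eq0.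
Qed.

Lemma mem_unity_roots_P1 (y : F) : (Some y \in P1) = (y \in U).
Proof. by apply/imsetP/idP => [[u uU [->]] // | yU]; exists y. Qed.

Lemma None_notin_unity_roots_P1 : (None \in P1) = false.
Proof. by apply/imsetP => -[]. Qed.

Lemma divf_unity_root (x y : F) : y != 0 ->
  (x / y \in U) = (x ^+ q.+1 == y ^+ q.+1).
Proof.
move=> y0; have yq0 : y ^+ q.+1 != 0 by rewrite expf_neq0.
rewrite inE exprMn exprVn; apply/eqP/eqP => [xy | ->]; last by rewrite divff.
by rewrite -(divfK yq0 (x ^+ q.+1)) xy mul1r.
Qed.

End UnityRoots.

Lemma card_unity_roots_gt2 (F : finFieldType) (q : nat) :
  2 \in [pchar F] -> #|F| = (q ^ 2)%N -> (2 < #|unity_roots F q|)%N.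
Proof.
move=> char2 cardF.
have q_gt1 : (1 < q)%N by move: (finNzRing_gt1 F); rewrite cardF; nia.
have [z zU z1] := unity_roots_nontrivial q_gt1 cardF.
have /card_uniqP card3 := pchar2_uniq_square char2 (unity_root_neq0 zU) z1.
have sub3 : [:: 1; z; z ^+ 2] \subset unity_roots F q.
  move: zU; rewrite inE => zq1.
  apply/subsetP => x; rewrite !inE => /or3P[] /eqP-> //.
    by rewrite expr1n.
  by rewrite exprAC (eqP zq1) expr1n.
by have := subset_leq_card sub3; rewrite card3.
Qed.

Section NormQuadratic.

Variables (F : finFieldType) (q : nat).
Local Notation U := (unity_roots F q).
Local Notation P1 := (unity_roots_P1 F q).

Definition norm_quad (x y u : F) :=
  x * y ^+ q * u ^+ 2 + (x ^+ q.+1 + y ^+ q.+1) * u + y * x ^+ q.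

Definition same_norm_quad (a b c d : F) : Prop :=
  [/\ a * b ^+ q = c * d ^+ q,
      a ^+ q.+1 + b ^+ q.+1 = c ^+ q.+1 + d ^+ q.+1
    & b * a ^+ q = d * c ^+ q].

Hypothesis exprqD : forall x y : F, (x + y) ^+ q = x ^+ q + y ^+ q.

Lemma norm_quadE (x y u : F) :
  u \in U -> u * (x * u + y) ^+ q.+1 = norm_quad x y u.
Proof.
rewrite inE exprS => /eqP uq1.
have -> : (x * u + y) ^+ q.+1 = (x * u + y) * (x ^+ q * u ^+ q + y ^+ q).
  by rewrite exprS exprqD exprMn.
transitivity ((x * u + y) * (x ^+ q * (u * u ^+ q) + y ^+ q * u)).
  by ring.
by rewrite uq1 /norm_quad !exprS; ring.
Qed.

Lemma mobius_unity_root (a b c d u : F) : u \in U -> c * u + d != 0 ->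
  ((a * u + b) / (c * u + d) \in U) = (norm_quad a b u == norm_quad c d u).
Proof.
move=> uU pole; rewrite divf_unity_root // -!norm_quadE //.
by rewrite (inj_eq (mulfI (unity_root_neq0 uU))).
Qed.

Lemma stabilizes_unity_roots_P1 (a b c d : F) : a * d - b * c != 0 ->
  {in U, forall u, c * u + d != 0} -> same_norm_quad a b c d ->
  stabilizes (mobius a b c d) P1.
Proof.
move=> det pole [eq2 eq1 eq0].
have sub : mobius a b c d @: P1 \subset P1.
  apply/subsetP => y /imsetP[[u|]]; rewrite ?None_notin_unity_roots_P1 //.
  rewrite mem_unity_roots_P1 => uU -> /=.
  rewrite pole // mem_unity_roots_P1 mobius_unity_root ?pole //.
  by rewrite /norm_quad eq2 eq1 eq0.
apply/eqP; rewrite eqEcard sub card_imset ?leqnn //.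
exact: can_inj (mobiusK det).
Qed.

Lemma stabilizes_norm_quad (a b c d : F) : stabilizes (mobius a b c d) P1 ->
  {in U, forall u, c * u + d != 0 /\ norm_quad a b u = norm_quad c d u}.
Proof.
move=> st u uU.
have : mobius a b c d (Some u) \in P1.
  by rewrite -st imset_f ?mem_unity_roots_P1.
rewrite /=; case: ifP => [pole | _]; last by rewrite None_notin_unity_roots_P1.
by rewrite mem_unity_roots_P1 mobius_unity_root // => /eqP.
Qed.

Lemma same_norm_quad_of_stabilizes (a b c d : F) : (2 < #|U|)%N ->
  stabilizes (mobius a b c d) P1 -> same_norm_quad a b c d.
Proof.
move=> U_gt2 /stabilizes_norm_quad st.
have [] := @quadratic_coef_eq0 _ (a * b ^+ q - c * d ^+ q)
  (a ^+ q.+1 + b ^+ q.+1 - (c ^+ q.+1 + d ^+ q.+1)) (b * a ^+ q - d * c ^+ q)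
  (enum U) (enum_uniq _); first by rewrite -cardE.
  move=> u; rewrite mem_enum => /st[_ /eqP]; rewrite -subr_eq0 => /eqP <-.
  by rewrite /norm_quad; ring.
by move=> /subr0_eq eq2 /subr0_eq eq1 /subr0_eq eq0; split.
Qed.

End NormQuadratic.

Section NormalForms.

Variables (F : finFieldType) (q : nat).
Local Notation U := (unity_roots F q).
Local Notation P1 := (unity_roots_P1 F q).
Local Notation same_norm_quad := (@same_norm_quad F q).

Hypothesis q_gt0 : (0 < q)%N.

Let expr0q : (0 : F) ^+ q = 0.
Proof. by rewrite expr0n gtn_eqF. Qed.

Let expr0Sq : (0 : F) ^+ q.+1 = 0.
Proof. by rewrite exprS mul0r. Qed.

Lemma same_norm_quad_typeI (a b d : F) : a * d - b * 0 != 0 ->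
  same_norm_quad a b 0 d ->
  exists2 u0, u0 \in U & mobius a b 0 d =1 mobius u0 0 0 1.
Proof.
rewrite mulr0 subr0 mulf_eq0 negb_or => /andP[a0 d0] [eq2 eq1 _].
have b0 : b = 0.
  move/eqP: eq2; rewrite mul0r mulf_eq0 (negbTE a0) expf_eq0.
  by case/andP=> _ /eqP.
exists (a / d).
  by move: eq1; rewrite b0 !expr0Sq addr0 add0r divf_unity_root // => ->.
by move=> x; rewrite b0 (mobius_scale _ _ _ _ d0) !mul0r divff.
Qed.

Lemma same_norm_quad_typeII (b c d : F) : 0 * d - b * c != 0 ->
  same_norm_quad 0 b c d ->
  exists2 u0, u0 \in U & mobius 0 b c d =1 mobius 0 u0 1 0.
Proof.
rewrite mul0r sub0r oppr_eq0 mulf_eq0 negb_or => /andP[b0 c0] [_ eq1 eq0].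
have d0 : d = 0.
  move/eqP: eq0; rewrite expr0q mulr0 eq_sym mulf_eq0 expf_eq0 (negbTE c0).
  by rewrite andbF orbF => /eqP.
exists (b / c).
  by move: eq1; rewrite d0 !expr0Sq addr0 add0r divf_unity_root // => ->.
by move=> x; rewrite d0 (mobius_scale _ _ _ _ c0) !mul0r divff.
Qed.

Lemma same_norm_quad_typeIII (a b c d : F) : a != 0 -> c != 0 ->
  a * d - b * c != 0 -> same_norm_quad a b c d ->
  exists u0 c0 : F, [/\ u0 \in U, c0 != 0, c0 \notin U &
                        mobius a b c d =1 mobius 1 (c0 ^+ q * u0) c0 u0].
Proof.
move=> a0 c0 det [eq2 eq1 eq0].
have aq0 : a ^+ q != 0 by rewrite expf_neq0.
have b_def : b = d * c ^+ q / a ^+ q by rewrite -eq0 mulfK.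
have bq_def : b ^+ q = c * d ^+ q / a by rewrite -eq2 mulrC mulKf.
have Nc : c ^+ q.+1 != a ^+ q.+1.
  apply: contraNneq det => Nca.
  have -> : a * d - b * c = d * (a ^+ q.+1 - c ^+ q.+1) / a ^+ q.
    by rewrite b_def !exprS; field.
  by rewrite Nca subrr mulr0 mul0r.
have Nd : d ^+ q.+1 = a ^+ q.+1.
  have Nb : b ^+ q.+1 = c ^+ q.+1 * d ^+ q.+1 / a ^+ q.+1.
    by rewrite exprS {1}b_def bq_def !exprS; field; rewrite a0 aq0.
  have : (a ^+ q.+1 - c ^+ q.+1) * (a ^+ q.+1 - d ^+ q.+1) = 0.
    transitivity
      (a ^+ q.+1 * (a ^+ q.+1 + b ^+ q.+1 - (c ^+ q.+1 + d ^+ q.+1))).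
      by rewrite Nb; field; rewrite expf_neq0.
    by rewrite eq1 subrr mulr0.
  move/eqP; rewrite mulf_eq0 subr_eq0 eq_sym (negbTE Nc) /= subr_eq0.
  by move/eqP.
exists (d / a), (c / a); split.
- by rewrite divf_unity_root // Nd.
- by rewrite mulf_neq0 ?invr_eq0.
- by rewrite divf_unity_root.
- move=> x; rewrite (mobius_scale _ _ _ _ a0) divff //; congr mobius.
  by rewrite b_def expr_div_n; field; rewrite a0 aq0.
Qed.

Hypothesis exprqD : forall x y : F, (x + y) ^+ q = x ^+ q + y ^+ q.

Lemma stabilizes_typeI (u0 : F) : u0 \in U -> stabilizes (mobius u0 0 0 1) P1.
Proof.
move=> u0U; have := u0U; rewrite inE => /eqP Nu0.
apply: stabilizes_unity_roots_P1 => //.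
- by rewrite mulr1 mulr0 subr0 (unity_root_neq0 u0U).
- by move=> u _; rewrite mul0r add0r oner_neq0.
- by split; rewrite ?expr0q ?expr0Sq ?expr1n ?Nu0 ?mulr0 ?mul0r ?addr0 ?add0r.
Qed.

Lemma stabilizes_typeII (u0 : F) : u0 \in U -> stabilizes (mobius 0 u0 1 0) P1.
Proof.
move=> u0U; have := u0U; rewrite inE => /eqP Nu0.
apply: stabilizes_unity_roots_P1 => //.
- by rewrite mulr0 sub0r mulr1 oppr_eq0 (unity_root_neq0 u0U).
- by move=> u uU; rewrite mul1r addr0 (unity_root_neq0 uU).
- by split; rewrite ?expr0q ?expr0Sq ?expr1n ?Nu0 ?mulr0 ?mul0r ?addr0 ?add0r.
Qed.

Hypothesis exprqK : forall x : F, x ^+ q ^+ q = x.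
Hypothesis char2 : 2 \in [pchar F].

Lemma stabilizes_typeIII (u0 c0 : F) : u0 \in U -> c0 \notin U ->
  stabilizes (mobius 1 (c0 ^+ q * u0) c0 u0) P1.
Proof.
move=> u0U; have := u0U; rewrite inE => /eqP Nu0; rewrite inE => Nc0.
apply: stabilizes_unity_roots_P1 => //.
- have -> : 1 * u0 - c0 ^+ q * u0 * c0 = u0 * (1 - c0 ^+ q.+1).
    by rewrite exprS; ring.
  by rewrite mulf_neq0 ?(unity_root_neq0 u0U) // subr_eq0 eq_sym.
- move=> u; rewrite inE => /eqP Nu; apply: contra Nc0 => /eqP pole.
  have u0_def : u0 = c0 * u.
    by apply/eqP; rewrite -(oppr_pchar2 char2 (c0 * u)) -addr_eq0 addrC pole.
  by rewrite -Nu0 u0_def exprMn Nu mulr1.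
- split.
  + by rewrite mul1r exprMn exprqK.
  + by rewrite expr1n exprMn Nu0 mulr1 exprS exprqK -exprSr addrC.
  + by rewrite expr1n mulr1 mulrC.
Qed.

End NormalForms.

Theorem proposition5 (F : finFieldType) (m : nat)
    (hF : #|F| = ((2 ^ m) ^ 2)%N)
    (a b c d : F) (hdet : a * d - b * c != 0) :
  stabilizes (mobius a b c d) (unity_roots_P1 F (2 ^ m)) <->
  [\/ (exists2 u0, u0 \in unity_roots F (2 ^ m) &
         mobius a b c d =1 mobius u0 0 0 1),
      (exists2 u0, u0 \in unity_roots F (2 ^ m) &
         mobius a b c d =1 mobius 0 u0 1 0)
    | (exists u0 c0 : F,
         [/\ u0 \in unity_roots F (2 ^ m), c0 != 0,
             c0 \notin unity_roots F (2 ^ m) &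
             mobius a b c d =1 mobius 1 (c0 ^+ (2 ^ m) * u0) c0 u0])].
Proof.
have char2 : 2 \in [pchar F].
  by apply: (card_finPcharP (n := (m * 2)%N)); rewrite // hF expnM.
have q_gt0 : (0 < 2 ^ m)%N by rewrite expn_gt0.
have exprqD (x y : F) : (x + y) ^+ (2 ^ m) = x ^+ (2 ^ m) + y ^+ (2 ^ m).
  by apply: exprDn_pchar; rewrite pnatX (pnatE _ (isT : prime 2)) char2.
have exprqK (x : F) : x ^+ (2 ^ m) ^+ (2 ^ m) = x.
  by rewrite -exprM -{2}(expf_card x) hF.
split=> [stab | ].
  have coefs := same_norm_quad_of_stabilizes exprqD
    (card_unity_roots_gt2 char2 hF) stab.
  have [c0 | c_neq0] := eqVneq c 0.
    by subst c; constructor 1; apply: same_norm_quad_typeI.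
  have [a0 | a_neq0] := eqVneq a 0.
    by subst a; constructor 2; apply: same_norm_quad_typeII.
  by constructor 3; apply: same_norm_quad_typeIII.
rewrite /stabilizes; case=> [[u0 u0U /eq_imset->] | [u0 u0U /eq_imset->] |
                            [u0 [c0 [u0U _ c0U /eq_imset->]]]].
- exact: stabilizes_typeI.
- exact: stabilizes_typeII.
- exact: stabilizes_typeIII.
Qed.
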